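(* Let $s$ be a Thiele scoring function with $s(2)-s(1)<s(1)$. Then the query function $g$ of the sequential Thiele rule induced by $s$, namely $g(A,k,(c_1,\dots,c_\ell))=\arg\max_{x\in C\setminus\{c_1,\dots,c_\ell\}}\hat s(A,\{x,c_1,\dots,c_\ell\})$, is standard, continuous and concurring.
   Context: Candidates form a finite set $C$, $|C|=m>1$. An approval profile $A$ has a nonempty finite voter set $N_A$, each $i\in N_A$ having a nonempty ballot $A_i\subseteq C$; $N_A(c)=\{i\in N_A:c\in A_i\}$, $n=|N_A|$. For profiles $A,A'$ and $\lambda\in\mathbb N$, $\lambda A+A'$ is the profile containing $\lambda$ copies of each voter of $A$ plus a copy of each voter of $A'$. A Thiele scoring function is $s:\mathbb N_0\to\mathbb Q$ with $s(0)=0$, $s(1)>0$, $s$ nondecreasing and concave ($s(x+1)-s(x)\ge s(x+2)-s(x+1)$); $\hat s(A,W)=\sum_{i\in N_A}s(|A_i\cap W|)$. $\mathcal S(C)$ is the set of non-repeating candidate sequences of length at most $m-2$. Axioms on a query function $g$ (mapping $(A,k,S)$, $S=(c_1,\dots,c_\ell)\in\mathcal S(C)$, to a subset of $C\setminus\{c_1,\dots,c_\ell\}$): (Continuity) for all $A,A',k,S$, $g(\lambda A+A',k,S)\subseteq g(A,k,S)$ for all sufficiently large $\lambda$. (Standardness) $g(A,k,\emptyset)$ is the set of candidates maximizing $|N_A(c)|$. (Concurrence) for every profile $A$ with $|A_i|\le2$ for all $i$ and $|N_A(c)|=|N_A(d)|\le n/k$ for all $c,d\in C$, every $(c_1,\dots,c_\ell)\in\mathcal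 S(C)$, and all $c,d\in C\setminus\{c_1,\dots,c_\ell\}$ with $|\{i:A_i=\{c_j,d\}\}|\ge|\{i:A_i=\{c_j,c\}\}|$ for all $j\le\ell$, at least one strictly, we have $d\notin g(A,k,(c_1,\dots,c_\ell))$. *)

From HB Require Import structures.
From mathcomp Require Import all_boot all_order all_algebra.
Set Implicit Arguments. Unset Strict Implicit. Unset Printing Implicit Defensive.
Import Order.TTheory GRing.Theory Num.Theory.
Local Open Scope ring_scope.

Section Defs.
Variable C : finType.

(* An approval profile: a finite list of voters, each given by a ballot.
   Voters are list entries (duplicates = distinct voters with equal ballots). *)
Local Notation profile := (seq {set C}).

Definition profile_ok (A : profile) : bool :=
  (A != [::]) && all (fun b : {set C} => b != set0) A.

Definition napp (A : profile) (c : C) : nat := count (fun b : {set C} => c \in b) A.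

Definition pscale_add (lam : nat) (A A' : profile) : profile :=
  flatten (nseq lam A) ++ A'.

Definition thiele_fn (s : nat -> rat) : Prop :=
  [/\ s 0%N = 0, 0 < s 1%N,
      (forall x, s x <= s x.+1) &
      (forall x, s x.+2 - s x.+1 <= s x.+1 - s x)].

Definition thiele_score (s : nat -> rat) (A : profile) (W : {set C}) : rat :=
  \sum_(b <- A) s #|b :&: W|.

Definition valid_seq (S : seq C) : bool := uniq S && (size S <= #|C| - 2)%N.

Definition query_fn := profile -> nat -> seq C -> {set C}.

Definition seq_thiele (s : nat -> rat) : query_fn :=
  fun A _ S =>
    [set x | (x \notin S) &&
       [forall y, (y \notin S) ==>
          (thiele_score s A (y |: [set z in S]) <=
           thiele_score s A (x |: [set z in S]))]].

Definition continuity (g : query_fn) : Prop :=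
  forall (A A' : profile) (k : nat) (S : seq C),
    profile_ok A -> profile_ok A' -> valid_seq S ->
    exists L : nat, forall lam : nat, (L <= lam)%N ->
      g (pscale_add lam A A') k S \subset g A k S.

Definition standardness (g : query_fn) : Prop :=
  forall (A : profile) (k : nat), profile_ok A ->
    g A k [::] = [set c | [forall d, (napp A d <= napp A c)%N]].

Definition npair (A : profile) (x y : C) : nat :=
  count (fun b : {set C} => b == [set x; y]) A.

Definition concurrence (g : query_fn) : Prop :=
  forall (A : profile) (k : nat), profile_ok A -> (0 < k)%N ->
    (forall b, b \in A -> (#|b| <= 2)%N) ->
    (forall c d : C, napp A c = napp A d) ->
    (forall c : C, (k * napp A c <= size A)%N) ->
    forall (S : seq C) (c d : C), valid_seq S ->
      c \notin S -> d \notin S ->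
      (forall cj, cj \in S -> (npair A cj c <= npair A cj d)%N) ->
      (exists2 cj, cj \in S & (npair A cj c < npair A cj d)%N) ->
      d \notin g A k S.

End Defs.

From HB Require Import structures.
From mathcomp Require Import all_boot all_order all_algebra.
From mathcomp Require Import ring lra.
Import Order.TTheory GRing.Theory Num.Theory.
Set Implicit Arguments.
Unset Strict Implicit.
Unset Printing Implicit Defensive.
Local Open Scope ring_scope.

(* The score of lam A + A' is lam times the score in A plus the score in A',
   so a strict loss in A against some y persists in lam A + A' once lam exceeds
   a bound, which can be chosen uniformly over the finitely many pairs (x, y).
   Over an empty sequence the score of {x} is |N_A(x)| s(1), which gives
   standardness.  When ballots have at most two candidates, adding x to
   {c_1, ..., c_l} raises the score by |N_A(x)| s(1) minus (2 s(1) - s(2))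
   times the number of ballots {c_j, x}; as all approval counts are equal and
   2 s(1) - s(2) > 0, the candidate d with strictly more such ballots than c
   gains strictly less than c, hence is not selected. *)

Lemma ltn_sum_seq (I : eqType) (r : seq I) (F G : I -> nat) i0 :
  i0 \in r -> (forall i, i \in r -> F i <= G i)%N -> (F i0 < G i0)%N ->
  (\sum_(i <- r) F i < \sum_(i <- r) G i)%N.
Proof.
move=> r_i0 leFG ltFG0.
rewrite !(perm_big _ (perm_to_rem r_i0)) !big_cons -addSn leq_add //.
by rewrite big_seq [leqRHS]big_seq leq_sum // => i /mem_rem /leFG.
Qed.

Lemma ltr_bound_mul (R : archiRealFieldType) (d e : R) (n : nat) :
  0 < d -> (Num.bound `|e / d| <= n)%N -> e < n%:R * d.
Proof.
move=> d_gt0 le_bn; rewrite -ltr_pdivrMr //.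
apply: le_lt_trans (ler_norm (e / d)) _.
by apply: lt_le_trans (archi_boundP (normr_ge0 _)) _; rewrite ler_nat.
Qed.

Section SetIU1.
Variable C : finType.
Implicit Types (b W : {set C}) (x : C).

Lemma setIU1_notin b W x : x \notin b -> b :&: (x |: W) = b :&: W.
Proof.
move=> xNb; apply/setP => y; rewrite !inE.
by case: eqP => // ->; rewrite (negbTE xNb).
Qed.

Lemma cardsIU1_in b W x : x \notin W -> x \in b ->
  #|b :&: (x |: W)| = #|b :&: W|.+1.
Proof.
move=> xNW xb; rewrite setIUr (setIidPr _) ?sub1set // cardsU1.
by rewrite inE (negbTE xNW) andbF.
Qed.

Lemma cardsI_le1 b W x : x \notin W -> x \in b -> (#|b| <= 2)%N ->
  (#|b :&: W| <= 1)%N.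
Proof.
move=> xNW xb b_le2; rewrite -ltnS -(cardsIU1_in xNW xb).
exact: leq_trans (subset_leq_card (subsetIl _ _)) b_le2.
Qed.

End SetIU1.

Section ThieleScore.
Variables (C : finType) (s : nat -> rat).
Hypothesis s0 : s 0%N = 0.
Implicit Types (A : seq {set C}) (b W : {set C}) (x : C).

Lemma thiele_score_cons b A W :
  thiele_score s (b :: A) W = s #|b :&: W| + thiele_score s A W.
Proof. by rewrite /thiele_score big_cons. Qed.

Lemma thiele_score_pscale_add lam A A' W :
  thiele_score s (pscale_add lam A A') W
  = lam%:R * thiele_score s A W + thiele_score s A' W.
Proof.
rewrite /pscale_add /thiele_score big_cat; congr (_ + _).
elim: lam => [|n IHn]; first by rewrite big_nil mul0r.
by rewrite /= big_cat IHn mulrSr mulrDl mul1r addrC.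
Qed.

Lemma thiele_score_set1 A x :
  thiele_score s A [set x] = (napp A x)%:R * s 1%N.
Proof.
elim: A => [|b A IHA]; first by rewrite /thiele_score big_nil mul0r.
rewrite thiele_score_cons IHA /napp /= natrD mulrDl; congr (_ + _).
rewrite -(setU0 [set x]); case: (boolP (x \in b)) => [xb|xNb].
  by rewrite cardsIU1_in ?inE // setI0 cards0 mul1r.
by rewrite setIU1_notin // setI0 cards0 s0 mul0r.
Qed.

(* A ballot meeting W in at most one candidate gains s(1) from x if it misses
   W, and s(2) - s(1) = s(1) - (2 s(1) - s(2)) if it meets W. *)
Lemma thiele_gain_ballot b W x : x \notin W ->
  (x \in b -> (#|b :&: W| <= 1)%N) ->
  s #|b :&: (x |: W)| = s #|b :&: W| + (x \in b : nat)%:R * s 1%N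
     - ((x \in b) && (b :&: W != set0) : nat)%:R * (s 1%N *+ 2 - s 2%N).
Proof.
move=> xNW; case: (boolP (x \in b)) => [xb /(_ isT)|xNb _] /=.
  rewrite cardsIU1_in // -cards_eq0; case: #|b :&: W| => [|[|]] //= _.
    by rewrite s0; lra.
  lra.
by rewrite setIU1_notin //; lra.
Qed.

Lemma thiele_score_setU1 A W x : x \notin W ->
  (forall b, b \in A -> x \in b -> (#|b :&: W| <= 1)%N) ->
  thiele_score s A (x |: W) = thiele_score s A W + (napp A x)%:R * s 1%N
   - (count (fun b => (x \in b) && (b :&: W != set0)) A)%:R
     * (s 1%N *+ 2 - s 2%N).
Proof.
move=> xNW; elim: A => [|b A IHA] small_meet.
  by rewrite /thiele_score /napp !big_nil /=; lra.
have small_meetA b' : b' \in A -> x \in b' -> (#|b' :&: W| <= 1)%N.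
  by move=> b'A; apply: small_meet; rewrite inE b'A orbT.
rewrite !thiele_score_cons (IHA small_meetA) thiele_gain_ballot //; last first.
  by apply: small_meet; rewrite inE eqxx.
by rewrite /napp /= !natrD; ring.
Qed.
End ThieleScore.

Section PairBallots.
Variable C : finType.
Implicit Types (A : seq {set C}) (b W : {set C}) (x : C) (S : seq C).

Lemma pair_ballot_meet b S x : uniq S -> x \notin S -> (#|b| <= 2)%N ->
  ((x \in b) && (b :&: [set z in S] != set0) : nat) =
  count (fun cj => b == [set cj; x]) S.
Proof.
move=> uS xNS b_le2.
case: (boolP ((x \in b) && _)) => [/andP[xb /set0Pn[cj]]|meetN] /=.
  rewrite !inE => /andP[cjb cjS].
  have cjNx : cj != x by apply: contraNneq xNS => <-.
  have -> : b = [set cj; x].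
    apply/eqP; rewrite eq_sym eqEcard subUset !sub1set cjb xb cards2 cjNx.
    exact: b_le2.
  rewrite (@eq_in_count _ _ (pred1 cj)) ?count_uniq_mem ?cjS // => cj' cj'S.
  apply/eqP/eqP => [E|-> //].
  have : cj' \in [set cj; x] by rewrite E !inE eqxx.
  by rewrite !inE => /orP[/eqP // | /eqP E']; rewrite -E' cj'S in xNS.
apply/esym/eqP; rewrite -leqn0 leqNgt -has_count; apply/hasPn => cj cjS.
apply: contra meetN => /eqP ->; rewrite !inE eqxx orbT /=.
by apply/set0Pn; exists cj; rewrite !inE eqxx cjS.
Qed.

Lemma count_meet_npair A S x : uniq S -> x \notin S ->
  (forall b, b \in A -> (#|b| <= 2)%N) ->
  count (fun b => (x \in b) && (b :&: [set z in S] != set0)) A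
  = (\sum_(cj <- S) npair A cj x)%N.
Proof.
move=> uS xNS; elim: A => [|b A IHA] small; first by rewrite big1.
rewrite /= big_split /= -IHA => [|b' b'A]; last first.
  by apply: small; rewrite inE b'A orbT.
rewrite pair_ballot_meet //; last by apply: small; rewrite inE eqxx.
by rewrite -sum1_count big_mkcond.
Qed.
End PairBallots.

Section SeqThiele.
Variables (C : finType) (s : nat -> rat).
Hypotheses (s0 : s 0%N = 0) (s1_gt0 : 0 < s 1%N).

Lemma seq_thiele_standard : standardness (seq_thiele (C:=C) s).
Proof.
move=> A k _; apply/setP => x; rewrite !inE /=.
have -> : [set z in ([::] : seq C)] = set0 by apply/setP => z; rewrite !inE.
apply: eq_forallb => y.
by rewrite !setU0 !thiele_score_set1 // ler_pM2r // ler_nat.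
Qed.

Lemma seq_thiele_continuous : continuity (seq_thiele (C:=C) s).
Proof.
move=> A A' k S _ _ _.
pose score A0 x := thiele_score s A0 (x |: [set z in S]).
pose gap A0 x y := score A0 x - score A0 y.
exists (\max_(p : C * C) Num.bound `|gap A' p.1 p.2 / gap A p.2 p.1|)%N.
move=> lam le_L; apply/subsetP => x; rewrite !inE => /andP[xNS /forallP x_max].
rewrite xNS /=; apply/forallP => y; apply/implyP => yNS.
rewrite leNgt; apply/negP => lt_xy.
have := x_max y; rewrite yNS /= !thiele_score_pscale_add => le_yx.
have gap_gt0 : 0 < gap A y x by rewrite subr_gt0.
have := ltr_bound_mul gap_gt0 (leq_trans (leq_bigmax (x, y)) le_L).
by rewrite /gap /score mulrBr; lra.
Qed.

Hypothesis s2_lt : s 2%N - s 1%N < s 1%N.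

Lemma seq_thiele_concurring : concurrence (seq_thiele (C:=C) s).
Proof.
move=> A k _ _ small eq_napp _ S c d /andP[uS _] cNS dNS le_pairs.
move=> [cj cjS lt_pair].
rewrite inE dNS /=; apply/forallPn; exists c; rewrite negb_imply cNS /= -ltNge.
have gain x : x \notin S -> thiele_score s A (x |: [set z in S]) =
    thiele_score s A [set z in S] + (napp A x)%:R * s 1%N
    - (\sum_(cj <- S) npair A cj x)%N%:R * (s 1%N *+ 2 - s 2%N).
  move=> xNS; rewrite -count_meet_npair // thiele_score_setU1 ?inE //.
  by move=> b bA xb; apply: cardsI_le1 xb (small b bA); rewrite inE.
rewrite !gain // (eq_napp d c).
rewrite ltrD2l ltrN2 ltr_pM2r; last by rewrite subr_gt0 mulr2n -ltrBlDr.
by rewrite ltr_nat; apply: ltn_sum_seq cjS le_pairs lt_pair.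
Qed.
End SeqThiele.

Theorem mainTheorem4 (C : finType) (s : nat -> rat) :
  (1 < #|C|)%N -> thiele_fn s -> s 2%N - s 1%N < s 1%N ->
  [/\ standardness (seq_thiele (C:=C) s),
      continuity (seq_thiele (C:=C) s) &
      concurrence (seq_thiele (C:=C) s)].
Proof.
move=> _ [s0 s1_gt0 _ _] s2_lt; split.
- exact: seq_thiele_standard.
- exact: seq_thiele_continuous.
- exact: seq_thiele_concurring.
Qed.
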